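(* Every monoid that is locally embeddable into the class of sofic monoids is itself sofic.
   Context: A monoid $M$ is locally embeddable into the class of sofic monoids if for every finite subset $K\subset M$ there exist a sofic monoid $N$ and a map $\psi\colon M\to N$ (not necessarily a morphism) such that $\psi$ is injective on $K$, $\psi(k_1k_2)=\psi(k_1)\psi(k_2)$ for all $k_1,k_2\in K$, and $\psi(1_M)=1_N$. For a non-empty finite set $X$, $\mathrm{Map}(X)$ is the monoid of all maps $X\to X$ under composition (identity $\mathrm{Id}_X$) with the Hamming metric $d_X(f,g)=|\{x\in X : f(x)\ne g(x)\}|/|X|$. For a monoid $M$, finite $K\subset M$ and $\varepsilon,\alpha>0$, a map $\varphi\colon M\to\mathrm{Map}(X)$ is a $(K,\varepsilon)$-morphism if $d_X(\varphi(k_1k_2),\varphi(k_1)\varphi(k_2))\le\varepsilon$ for all $k_1,k_2\in K$ and $d_X(\varphi(1_M),\mathrm{Id}_X)\le\varepsilon$; it is $(K,\alpha)$-injective if $d_X(\varphi(k_1),\varphi(k_2))\ge\alpha$ for all distinct $k_1,k_2\in K$. $M$ is sofic if for every finite $K\subset M$ and every $\varepsilon>0$ there exist a non-empty finite set $X$ and a $(K,1-\varepsilon)$-injective $(K,\varepsilon)$-morphism $\varphi\colon M\to\mathrm{Map}(X)$. *)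

From mathcomp Require Import all_boot.
From Stdlib Require Import Reals List.

Set Implicit Arguments.
Unset Strict Implicit.
Unset Printing Implicit Defensive.

Record monoid := Monoid {
  carrier :> Type;
  mmul : carrier -> carrier -> carrier;
  mone : carrier;
  mmulA : forall a b c, mmul a (mmul b c) = mmul (mmul a b) c;
  mmul1l : forall a, mmul mone a = a;
  mmul1r : forall a, mmul a mone = a
}.

(* Hamming distance on Map(X) = X -> X (product in Map(X) is composition,
   identity is the identity map). *)
Definition hdist (X : finType) (f g : X -> X) : R :=
  (INR #|[pred x | f x != g x]| / INR #|X|)%R.

(* Finite subsets K of M are represented by lists. *)
Definition is_KE_morphism (M : monoid) (X : finType) (K : list M) (eps : R)
  (phi : M -> X -> X) : Prop :=
  (forall k1 k2, In k1 K -> In k2 K ->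
     (hdist (phi (mmul k1 k2)) (fun x => phi k1 (phi k2 x)) <= eps)%R) /\
  (hdist (phi (mone M)) (fun x => x) <= eps)%R.

Definition is_KA_injective (M : monoid) (X : finType) (K : list M) (alpha : R)
  (phi : M -> X -> X) : Prop :=
  forall k1 k2, In k1 K -> In k2 K -> k1 <> k2 ->
     (alpha <= hdist (phi k1) (phi k2))%R.

Definition sofic (M : monoid) : Prop :=
  forall (K : list M) (eps : R), (0 < eps)%R ->
    exists (X : finType), 0 < #|X| /\
    exists phi : M -> X -> X,
      is_KA_injective K (1 - eps)%R phi /\ is_KE_morphism K eps phi.

Definition locally_embeddable_sofic (M : monoid) : Prop :=
  forall K : list M,
    exists (N : monoid) (psi : M -> N),
      sofic N /\
      (forall k1 k2, In k1 K -> In k2 K -> psi k1 = psi k2 -> k1 = k2) /\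
      (forall k1 k2, In k1 K -> In k2 K ->
         psi (mmul k1 k2) = mmul (psi k1) (psi k2)) /\
      psi (mone M) = mone N.

From mathcomp Require Import all_boot.
From Stdlib Require Import Reals List.

(* Given K, pull back a sofic approximation of the sofic monoid N along the
   local embedding psi : M -> N: on K, psi is injective, multiplicative and
   unital, so phi \o psi inherits every approximation property of phi on
   the image of K. *)

Section PullbackAlongLocalEmbedding.

Variables (M N : monoid) (psi : M -> N) (X : finType) (phi : N -> X -> X).

Lemma KA_injective_comp (K : list M) (alpha : R) :
  (forall k1 k2, In k1 K -> In k2 K -> psi k1 = psi k2 -> k1 = k2) ->
  is_KA_injective (map psi K) alpha phi ->
  is_KA_injective K alpha (fun m => phi (psi m)).
Proof.
move=> psi_inj phi_inj k1 k2 K1 K2 neq12.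
apply: phi_inj; [exact: in_map | exact: in_map |].
by move=> /(psi_inj _ _ K1 K2).
Qed.

Lemma KE_morphism_comp (K : list M) (eps : R) :
  (forall k1 k2, In k1 K -> In k2 K ->
     psi (mmul k1 k2) = mmul (psi k1) (psi k2)) ->
  psi (mone M) = mone N ->
  is_KE_morphism (map psi K) eps phi ->
  is_KE_morphism K eps (fun m => phi (psi m)).
Proof.
move=> psiM psi1 [phiM phi1]; split; last by rewrite psi1.
move=> k1 k2 K1 K2; rewrite (psiM _ _ K1 K2).
by apply: phiM; exact: in_map.
Qed.

End PullbackAlongLocalEmbedding.

Theorem proposition3p13 (M : monoid) :
  locally_embeddable_sofic M -> sofic M.
Proof.
move=> embM K eps eps_gt0.
have [N [psi [soficN [psi_inj [psiM psi1]]]]] := embM K.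
have [X [X_gt0 [phi [phi_inj phi_mor]]]] := soficN (map psi K) eps eps_gt0.
exists X; split=> //; exists (fun m => phi (psi m)); split.
- exact: KA_injective_comp.
- exact: KE_morphism_comp.
Qed.
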